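(* Let $[Q,P]$ be a dynamical structure function ($Q$ $p\times p$, $P$ $p\times m$, strictly proper) and assume $[I-Q,\ P]$ has only simple poles and has no common poles and zeros. Write its Gilbert realisation $[I-Q,\ P]=\sum_{i=1}^l \frac{K_i}{s-\lambda_i}+[I,\ 0]$ with $K_i=\lim_{s\to\lambda_i}(s-\lambda_i)[I-Q,\ P]$ of rank one, decomposed as $K_i=E_iF_i$ with $E_i\in\mathbb{C}^p$ and $F_i=(E_i^TE_i)^{-1}E_i^TK_i$. Let $N(s)=C_2(A_2-sI)^{-1}B_2+I$ be a diagonal $p\times p$ transfer matrix with minimal realisation $(A_2,B_2,C_2,I)$. If a pole $\lambda_i$ of $[I-Q,\ P]$ is cancelled by cascading $N(s)$ (forming $N(s)[I-Q,\ P]$), then $N(\lambda_i)E_i=0$. *)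

From HB Require Import structures.
From mathcomp Require Import all_boot all_order all_algebra.
From mathcomp Require Import all_classical all_reals all_analysis.
From mathcomp Require Export complex.
Export Order.TTheory GRing.Theory Num.Theory.
Export numFieldTopology.Exports numFieldNormedType.Exports.

Set Implicit Arguments.
Unset Strict Implicit.
Unset Printing Implicit Defensive.

Local Open Scope ring_scope.
Local Open Scope classical_set_scope.

(* The complex numbers C = R[i], packaged as a numClosedFieldType so that the
   standard metric topology of MathComp-Analysis applies. *)
Definition Cx (R : realType) : numClosedFieldType := R[i].

Section TransferMatrices.
Variable R : realType.
Local Notation C := (Cx R).

Definition is_eig n (A : 'M[C]_n) (s : C) : bool := \det (s%:M - A) == 0.

Definition ss_tf n p q (A : 'M[C]_n) (B : 'M[C]_(n, q)) (Cm : 'M[C]_(p, n))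
  (D : 'M[C]_(p, q)) (s : C) : 'M[C]_(p, q) :=
  Cm *m invmx (s%:M - A) *m B + D.

Definition realizes p q (G : C -> 'M[C]_(p, q)) n (A : 'M[C]_n)
  (B : 'M[C]_(n, q)) (Cm : 'M[C]_(p, n)) (D : 'M[C]_(p, q)) : Prop :=
  forall s, ~~ is_eig A s -> G s = ss_tf A B Cm D s.

(* Kalman rank conditions: rank [B, AB, ..., A^(n-1)B] = n, etc. *)
Definition controllable n q (A : 'M[C]_n) (B : 'M[C]_(n, q)) : bool :=
  row_full (\sum_(k < n) <<(A ^+ k *m B)^T>>)%MS.

Definition observable n p (A : 'M[C]_n) (Cm : 'M[C]_(p, n)) : bool :=
  controllable A^T Cm^T.

Definition minimal_real n p q (A : 'M[C]_n) (B : 'M[C]_(n, q))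
  (Cm : 'M[C]_(p, n)) : bool := controllable A B && observable A Cm.

Definition strictly_proper p q (G : C -> 'M[C]_(p, q)) : Prop :=
  exists n (A : 'M[C]_n) (B : 'M[C]_(n, q)) (Cm : 'M[C]_(p, n)),
    realizes G A B Cm 0.

Definition is_pole p q (G : C -> 'M[C]_(p, q)) (a : C) : Prop :=
  ~ cvg (G s @[s --> a^']).

Definition only_simple_poles p q (G : C -> 'M[C]_(p, q)) : Prop :=
  forall a, is_pole G a -> cvg ((s - a) *: G s @[s --> a^']).

Definition rosenbrock n p q (A : 'M[C]_n) (B : 'M[C]_(n, q))
  (Cm : 'M[C]_(p, n)) (D : 'M[C]_(p, q)) (z : C) : 'M[C]_(n + p, n + q) :=
  block_mx (A - z%:M) B Cm D.

(* z is a (transmission) zero of G: for a minimal realisation of G, the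
   Rosenbrock matrix drops rank at z below its normal rank *)
Definition is_zero p q (G : C -> 'M[C]_(p, q)) (z : C) : Prop :=
  exists n (A : 'M[C]_n) (B : 'M[C]_(n, q)) (Cm : 'M[C]_(p, n))
    (D : 'M[C]_(p, q)),
    [/\ minimal_real A B Cm, realizes G A B Cm D &
        exists s, \rank (rosenbrock A B Cm D z) < \rank (rosenbrock A B Cm D s)]%N.

Definition no_common_poles_zeros p q (G : C -> 'M[C]_(p, q)) : Prop :=
  forall z, is_pole G z -> ~ is_zero G z.

Definition dsf_mx p m (Q : C -> 'M[C]_p) (P : C -> 'M[C]_(p, m)) (s : C)
  : 'M[C]_(p, p + m) := row_mx (1 - Q s) (P s).

Definition gilbertF p q (E : 'cV[C]_p) (K : 'M[C]_(p, q)) : 'rV[C]_q :=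
  invmx (E^T *m E) *m E^T *m K.

Definition Ntf n p (A2 : 'M[C]_n) (B2 : 'M[C]_(n, p)) (C2 : 'M[C]_(p, n))
  (s : C) : 'M[C]_p :=
  C2 *m invmx (A2 - s%:M) *m B2 + 1.

End TransferMatrices.

(* If N(s) [I - Q, P](s) has no pole at lambda_i, then
   (s - lambda_i) N(s) [I - Q, P](s) tends to 0 as s -> lambda_i.  Since N is
   continuous at lambda_i and (s - lambda_i) [I - Q, P](s) tends to the residue
   K_i, this limit is also N(lambda_i) K_i, so N(lambda_i) E_i F_i = 0.  As
   K_i = E_i F_i has rank one, F_i is a nonzero row, which can be cancelled on
   the right. *)

From HB Require Import structures.
From mathcomp Require Import all_boot all_order all_algebra.
From mathcomp Require Import all_classical all_reals all_analysis.
Import Order.TTheory GRing.Theory Num.Theory.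
Import numFieldTopology.Exports numFieldNormedType.Exports.
Local Open Scope ring_scope.
Local Open Scope classical_set_scope.

(* The library gives no product rule for limits in its matrix topology, so
   limits of matrix expressions are taken entry by entry. *)
Section EntrywiseLimits.
Context {K : numFieldType} {T : Type} {F : set_system T} {FF : Filter F}.

Definition cvg_entrywise {m n} (M : T -> 'M[K]_(m, n)) (L : 'M[K]_(m, n)) :=
  forall i j, M x i j @[x --> F] --> L i j.

Lemma cvg_entrywiseP {m n} {M : T -> 'M[K]_(m, n)} {L : 'M[K]_(m, n)} :
  M x @[x --> F] --> L -> cvg_entrywise M L.
Proof.
move=> ML i j.
have entry_cvg : (fun N : 'M[K]_(m, n) => N i j) x @[x --> L] --> L i j.
  move=> A /nbhs_ballP[e e0 eA]; apply/nbhs_ballP; exists e => // N [_ LN].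
  exact: eA (LN i j).
exact: cvg_comp ML entry_cvg.
Qed.

Lemma cvg_entrywise_cst {m n} (L : 'M[K]_(m, n)) :
  cvg_entrywise (fun=> L) L.
Proof. by move=> i j; exact: cvg_cst. Qed.

Lemma cvg_entrywiseD {m n} {M N : T -> 'M[K]_(m, n)} {L1 L2} :
  cvg_entrywise M L1 -> cvg_entrywise N L2 ->
  cvg_entrywise (fun x => M x + N x) (L1 + L2).
Proof.
move=> ML NL i j; rewrite mxE; under eq_cvg do rewrite mxE.
exact: cvgD.
Qed.

Lemma cvg_entrywiseM {m n r} {M : T -> 'M[K]_(m, n)} {N : T -> 'M[K]_(n, r)}
    {L1 L2} :
  cvg_entrywise M L1 -> cvg_entrywise N L2 ->
  cvg_entrywise (fun x => M x *m N x) (L1 *m L2).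
Proof.
move=> ML NL i j; rewrite mxE; under eq_cvg do rewrite mxE.
by apply: (cvg_big add_continuous) => k _; exact: cvgM.
Qed.

Lemma cvg_det {n} {M : T -> 'M[K]_n} {L : 'M[K]_n} :
  cvg_entrywise M L -> \det (M x) @[x --> F] --> \det L.
Proof.
move=> ML; apply: (cvg_big add_continuous) => s _.
by apply: cvgMl_tmp; apply: (cvg_big mul_continuous) => i _; exact: ML.
Qed.

Lemma cvg_entrywise_adj {n} {M : T -> 'M[K]_n} {L : 'M[K]_n} :
  cvg_entrywise M L -> cvg_entrywise (fun x => \adj (M x)) (\adj L).
Proof.
move=> ML i j; rewrite mxE /cofactor; under eq_cvg do rewrite mxE /cofactor.
apply: cvgMl_tmp; apply: cvg_det => a b.
by rewrite !mxE; under eq_cvg do rewrite !mxE; exact: ML.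
Qed.

Lemma cvg_entrywise_invmx {n} {M : T -> 'M[K]_n} {L : 'M[K]_n} :
  L \in unitmx -> cvg_entrywise M L ->
  cvg_entrywise (fun x => invmx (M x)) (invmx L).
Proof.
move=> uL ML i j.
have detL0 : \det L != 0 by rewrite -unitfE -unitmxE.
have near_unit := cvgr_neq0 _ (cvg_det ML) detL0.
have near_adj : {near F, (fun x => (\det (M x))^-1 * \adj (M x) i j)
                          =1 (fun x => invmx (M x) i j)}.
  near=> x; rewrite /invmx unitmxE unitfE.
  have -> : \det (M x) != 0 by near: x; exact: near_unit.
  by rewrite !mxE.
apply: cvg_trans (near_eq_cvg near_adj) _.
rewrite /invmx uL [(_ *: \adj L) i j]mxE.
apply: cvgM; last exact: cvg_entrywise_adj.
by apply: cvgV => //; exact: cvg_det.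
Unshelve. all: by end_near. Qed.

End EntrywiseLimits.

Lemma cancelled_pole_residue (K : numFieldType) p q r
    (N : K -> 'M[K]_(p, q)) (G : K -> 'M[K]_(q, r)) (a : K) N0 Res :
  cvg_entrywise (F := a^') N N0 ->
  (s - a) *: G s @[s --> a^'] --> Res ->
  cvg (N s *m G s @[s --> a^']) ->
  N0 *m Res = 0.
Proof.
move=> NN0 GRes /cvg_ex[L NGL]; apply/matrixP => i j.
have to_N0Res : (N s *m ((s - a) *: G s)) i j @[s --> a^'] --> (N0 *m Res) i j.
  by apply: cvg_entrywiseM => //; exact: cvg_entrywiseP.
have to_0 : (N s *m ((s - a) *: G s)) i j @[s --> a^'] --> (a - a) * L i j.
  under eq_cvg do rewrite -scalemxAr mxE.
  apply: cvgM; last exact: cvg_entrywiseP NGL i j.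
  by apply: cvgB; [exact: cvg_within_filter cvg_id | exact: cvg_cst].
by rewrite (cvg_unique _ to_N0Res to_0) // subrr mul0r mxE.
Qed.

Lemma mulmx_rank1_eq0 {K : fieldType} {k p q} {M : 'M[K]_(k, p)}
    {E : 'cV[K]_p} {F : 'rV[K]_q} :
  \rank (E *m F) = 1%N -> M *m (E *m F) = 0 -> M *m E = 0.
Proof.
move=> rankEF MEF0; have freeF : row_free F.
  have := mxrankM_maxr E F; rewrite rankEF => rankF_ge1.
  by rewrite /row_free eqn_leq rank_leq_row rankF_ge1.
by apply/eqP; rewrite -(mulmx_free_eq0 _ freeF) -mulmxA MEF0.
Qed.

Section TransferMatrixContinuity.
Variable R : realType.
Local Notation C := (Cx R).

Lemma not_eig_unitmx {n} {A : 'M[C]_n} {s : C} :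
  ~~ is_eig A s -> A - s%:M \in unitmx.
Proof.
rewrite /is_eig unitmxE unitfE => not_eig.
rewrite -[A - _]opprB -scaleN1r detZ mulf_eq0 negb_or not_eig andbT.
by rewrite expf_eq0 oppr_eq0 oner_eq0 andbF.
Qed.

Lemma cvg_Ntf n p (A : 'M[C]_n) (B : 'M[C]_(n, p)) (Cm : 'M[C]_(p, n)) a :
  ~~ is_eig A a -> cvg_entrywise (F := a^') (Ntf A B Cm) (Ntf A B Cm a).
Proof.
move=> not_eig; apply/cvg_entrywiseD/cvg_entrywise_cst.
apply/cvg_entrywiseM/cvg_entrywise_cst.
apply/cvg_entrywiseM; first exact: cvg_entrywise_cst.
apply: (cvg_entrywise_invmx (not_eig_unitmx not_eig)) => i j.
rewrite !mxE; under eq_cvg do rewrite !mxE.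
apply: cvgB; first exact: cvg_cst.
by apply: cvgMn; exact: cvg_within_filter cvg_id.
Qed.

End TransferMatrixContinuity.

Theorem theorem2 (R : realType) (p m l : nat)
  (Q : Cx R -> 'M[Cx R]_p) (P : Cx R -> 'M[Cx R]_(p, m))
  (lam : 'I_l -> Cx R) (K : 'I_l -> 'M[Cx R]_(p, p + m))
  (E : 'I_l -> 'cV[Cx R]_p)
  (n2 : nat) (A2 : 'M[Cx R]_n2) (B2 : 'M[Cx R]_(n2, p))
  (C2 : 'M[Cx R]_(p, n2)) (i : 'I_l) :
  strictly_proper Q -> strictly_proper P ->
  only_simple_poles (dsf_mx Q P) ->
  no_common_poles_zeros (dsf_mx Q P) ->
  injective lam ->
  (forall a, is_pole (dsf_mx Q P) a <-> exists j, a = lam j) ->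
  (forall j, (s - lam j) *: dsf_mx Q P s @[s --> (lam j)^'] --> K j) ->
  (forall s, (forall j, s != lam j) ->
     dsf_mx Q P s = \sum_(j < l) (s - lam j)^-1 *: K j + row_mx 1 0) ->
  (forall j, \rank (K j) = 1%N) ->
  (forall j, ((E j)^T *m E j \in unitmx) /\ K j = E j *m gilbertF (E j) (K j)) ->
  minimal_real A2 B2 C2 ->
  (forall s, ~~ is_eig A2 s -> is_diag_mx (Ntf A2 B2 C2 s)) ->
  ~~ is_eig A2 (lam i) ->
  ~ is_pole (fun s => Ntf A2 B2 C2 s *m dsf_mx Q P s) (lam i) ->
  Ntf A2 B2 C2 (lam i) *m E i = 0.
Proof.
move=> _ _ _ _ _ _ residue _ rankK gilbert _ _ not_eig cancelled.
have [_ K_EF] := gilbert i.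
have rank_EF := rankK i; rewrite K_EF in rank_EF.
apply: (mulmx_rank1_eq0 rank_EF); rewrite -K_EF.
apply: cancelled_pole_residue (residue i) (contrapT cancelled).
exact: cvg_Ntf.
Qed.
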